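(* Let $v_1,v_2$ be two (smooth) solutions of $( * )$ on $X$ such that, for some $C>0$ and $\epsilon\in(0,1)$, $0\le v_2-v_1\le C(y^{\epsilon}+y^{1-\epsilon})$ on all of $X$. Then $v_1=v_2$.
   Context: $X=\mathbb{R}^2\times(0,+\infty)$ with coordinates $(x_1,x_2,y)$, $z=x_1+ix_2$, $\Delta=\partial_1^2+\partial_2^2+\partial_y^2$; $P(z)$ is a non-zero complex polynomial; $( * )$ is the equation $\Delta u+e^{-2u}|P(z)|^2=0$ on $X$. *)

From Coquelicot Require Import Coquelicot.
From Stdlib Require Import Reals List.
Open Scope R_scope.

(* Points of R^2 x R are triples ((x1, x2), y). *)
Definition pt := (R * R * R)%type.
Definition inX (p : pt) : Prop := 0 < snd p.

(* Partial derivative in direction i (0: x1, 1: x2, otherwise: y). *)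
Definition partial (i : nat) (f : pt -> R) (p : pt) : R :=
  match i with
  | O => Derive (fun t => f (t, snd (fst p), snd p)) (fst (fst p))
  | S O => Derive (fun t => f (fst (fst p), t, snd p)) (snd (fst p))
  | _ => Derive (fun t => f (fst (fst p), snd (fst p), t)) (snd p)
  end.

Definition partial_exists (i : nat) (f : pt -> R) (p : pt) : Prop :=
  match i with
  | O => ex_derive (fun t => f (t, snd (fst p), snd p)) (fst (fst p))
  | S O => ex_derive (fun t => f (fst (fst p), t, snd p)) (snd (fst p))
  | _ => ex_derive (fun t => f (fst (fst p), snd (fst p), t)) (snd p)
  end.

Fixpoint iter_partial (l : list nat) (f : pt -> R) : pt -> R :=
  match l with
  | nil => f
  | i :: l' => partial i (iter_partial l' f)
  end.

Definition smooth_on_X (f : pt -> R) : Prop :=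
  forall (l : list nat) (p : pt), inX p ->
    continuous (iter_partial l f) p /\
    forall i : nat, (i <= 2)%nat -> partial_exists i (iter_partial l f) p.

Definition laplacian (f : pt -> R) (p : pt) : R :=
  partial 0 (partial 0 f) p + partial 1 (partial 1 f) p
  + partial 2 (partial 2 f) p.

(* Complex polynomial given by its list of coefficients [a0; a1; ...],
   evaluated by Horner's rule: a0 + z (a1 + z (a2 + ...)). *)
Definition peval (P : list Complex.C) (z : Complex.C) : Complex.C :=
  fold_right (fun a acc : Complex.C => Cplus a (Cmult z acc)) (RtoC 0) P.

Definition nonzero_poly (P : list Complex.C) : Prop := exists a, In a P /\ a <> RtoC 0.

(* The equation ( * ): Δu + e^{-2u} |P(z)|^2 = 0 on X, z = x1 + i x2. *)
Definition solves_star (P : list Complex.C) (u : pt -> R) : Prop :=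
  smooth_on_X u /\
  forall p : pt, inX p ->
    laplacian u p
    + exp (-2 * u p) * (Cmod (peval P (fst (fst p), snd (fst p))))^2 = 0.

(* Let w = v2 - v1 >= 0.  Since v1 <= v2, the equations give
   Delta w = |P|^2 (e^{-2 v1} - e^{-2 v2}) >= 0: w is subharmonic.  The growth
   bound w <= g(y) with g(y) = K (y^eps + y^(1-eps)) is small as y -> 0 and
   sublinear as y -> oo, and a maximum principle with a barrier excludes a
   positive value of w.  Suppose w(a, b, y0) = del > 0 and compare w with
     h = A + B y + D ((x1 - a)^2 + (x2 - b)^2) - E y^2,   E = 3 D,
   whose Laplacian is -2D < 0.  With A = del/2, B = del/(4 y0), Y large,
   E = B/(2Y) and eta small, w - h is positive at (a, b, y0) but negative on
   the boundary of the box [a-3Y, a+3Y] x [b-3Y, b+3Y] x [eta, Y]; so its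
   maximum over the box (extreme value theorem) is attained at an interior
   point, where the one-variable second derivative test in each coordinate
   direction gives Delta w <= Delta h < 0, a contradiction. *)

From Coquelicot Require Import Coquelicot.
From Stdlib Require Import Reals List Lra Lia.
From mathcomp Require all_boot all_order all_algebra.
From mathcomp Require all_classical all_reals all_analysis Rstruct Rstruct_topology.
Open Scope R_scope.

Definition in_box (a1 b1 a2 b2 a3 b3 : R) (p : pt) : Prop :=
  a1 <= fst (fst p) <= b1 /\ a2 <= snd (fst p) <= b2 /\ a3 <= snd p <= b3.

Definition in_cube (c : pt) (r : R) (q : pt) : Prop :=
  Rabs (fst (fst q) - fst (fst c)) < r /\ Rabs (snd (fst q) - snd (fst c)) < r
  /\ Rabs (snd q - snd c) < r.

Lemma continuous_cube (f : pt -> R) (p : pt) :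
  continuous f p -> forall e, 0 < e ->
  exists d, 0 < d /\ forall q, in_cube p d q -> Rabs (f q - f p) < e.
Proof.
intros hc e he.
destruct (proj1 (filterlim_locally f (f p)) hc (mkposreal e he)) as [d hd].
exists d; split; [apply cond_pos|].
intros q (h1 & h2 & h3); apply (hd q); repeat split; assumption.
Qed.

(* The extreme value theorem on a box, from compactness in mathcomp-analysis;
   continuity is given in epsilon-delta form to bridge the two libraries. *)
Module BoxExtremeValue.
Import all_boot all_order all_algebra all_classical all_reals all_analysis.
Import Rstruct Rstruct_topology.
Local Open Scope classical_set_scope.

Lemma attains_max (f : pt -> R) (a1 b1 a2 b2 a3 b3 : R) :
  Rle a1 b1 -> Rle a2 b2 -> Rle a3 b3 ->
  (forall p, in_box a1 b1 a2 b2 a3 b3 p -> forall e : R, Rlt 0 e ->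
     exists d : R, Rlt 0 d /\ forall q, in_cube p d q -> Rlt (Rabs (Rminus (f q) (f p))) e) ->
  exists c, in_box a1 b1 a2 b2 a3 b3 c /\
    forall q, in_box a1 b1 a2 b2 a3 b3 q -> Rle (f q) (f c).
Proof.
move=> h1 h2 h3 hc.
set A := (`[a1, b1]%classic `*` `[a2, b2]%classic) `*` `[a3, b3]%classic : set pt.
have eA : forall p, A p <-> in_box a1 b1 a2 b2 a3 b3 p.
  move=> [[x y] z]; rewrite /A /in_box /= !in_itv /=.
  split.
  - by move=> [[/andP[/RleP ? /RleP ?] /andP[/RleP ? /RleP ?]] /andP[/RleP ? /RleP ?]].
  - by move=> [[/RleP -> /RleP ->] [[/RleP -> /RleP ->] [/RleP -> /RleP ->]]].
have A0 : A !=set0 by exists (a1, a2, a3); apply/eA; rewrite /in_box /=; lra.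
have cA : compact A.
  by apply: compact_setX; [apply: compact_setX|]; exact: segment_compact.
have cf : {within A, continuous f}.
  apply: continuous_in_subspaceT => p /set_mem /eA Ap.
  apply/cvg_ballP => e /RltP e0.
  have [d [/RltP d0 hd]] := hc p Ap e e0.
  exists (ball p.1 d, ball p.2 d); first by split; apply: nbhsx_ballx.
  move=> q [[/= bq1 bq2] bq3].
  rewrite /ball /= -!RabsE in bq1 bq2 bq3 *.
  apply/RltP; rewrite Rabs_minus_sym; apply: hd.
  by rewrite /in_cube; split; [|split]; rewrite Rabs_minus_sym; apply/RltP.
have [c cA' mx] := compact_EVT_max A0 cA cf.
exists c; split; first by apply/eA; exact: set_mem.
by move=> q /eA /mem_set /mx /RleP.
Qed.
End BoxExtremeValue.

Lemma continuous_attains_max_on_box (f : pt -> R) (a1 b1 a2 b2 a3 b3 : R) :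
  a1 <= b1 -> a2 <= b2 -> a3 <= b3 ->
  (forall p, in_box a1 b1 a2 b2 a3 b3 p -> continuous f p) ->
  exists c, in_box a1 b1 a2 b2 a3 b3 c /\
    forall q, in_box a1 b1 a2 b2 a3 b3 q -> f q <= f c.
Proof.
intros h1 h2 h3 hc.
apply BoxExtremeValue.attains_max; try assumption.
intros p hp; apply continuous_cube, hc, hp.
Qed.

Lemma derivative_crossing (g' : R -> R) (t0 L : R) :
  is_derive g' t0 L -> 0 < L ->
  exists d, 0 < d /\ forall t, t <> t0 -> Rabs (t - t0) < d ->
    0 < (g' t - g' t0) * (t - t0).
Proof.
intros hd hL.
destruct (proj1 (is_derive_Reals g' t0 L) hd (L / 2) ltac:(lra)) as [d hq].
exists d; split; [apply cond_pos|].
intros t ht hdt.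
assert (hq' := hq (t - t0) ltac:(lra) hdt).
replace (t0 + (t - t0)) with t in hq' by ring.
apply Rabs_def2 in hq'.
replace ((g' t - g' t0) * (t - t0))
  with ((g' t - g' t0) / (t - t0) * (t - t0) ^ 2) by (field; lra).
apply Rmult_lt_0_compat; [lra|].
apply pow2_gt_0; lra.
Qed.

Lemma second_derivative_at_local_max (g g' : R -> R) (t0 r L : R) :
  0 < r ->
  (forall t, Rabs (t - t0) < r -> is_derive g t (g' t)) ->
  is_derive g' t0 L ->
  (forall t, Rabs (t - t0) < r -> g t <= g t0) ->
  L <= 0.
Proof.
intros hr hg hg' hmax.
apply Rnot_lt_le; intro hL.
destruct (derivative_crossing g' t0 L hg' hL) as [d [hd hcross]].
set (m := Rmin d r / 2).
assert (hm : 0 < m) by (unfold m; apply Rmin_case; lra).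
assert (hmd : m < d) by (unfold m; pose proof (Rmin_l d r); lra).
assert (hmr : m < r) by (unfold m; pose proof (Rmin_r d r); lra).
assert (hmvt : forall u v, t0 - m <= u < v -> v <= t0 + m ->
          exists c, g v - g u = g' c * (v - u) /\ u < c < v).
{ intros u v huv hv. apply MVT_cor2; [lra|].
  intros c hc. apply is_derive_Reals, hg. apply Rabs_def1; lra. }
destruct (Rle_or_lt 0 (g' t0)) as [hpos|hneg].
- destruct (hmvt t0 (t0 + m)) as [c [hc [hc1 hc2]]]; [lra|lra|].
  assert (hcr := hcross c ltac:(lra) ltac:(apply Rabs_def1; lra)).
  assert (0 < g' c) by nra.
  assert (g (t0 + m) <= g t0) by (apply hmax; apply Rabs_def1; lra).
  nra.
- destruct (hmvt (t0 - m) t0) as [c [hc [hc1 hc2]]]; [lra|lra|].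
  assert (hcr := hcross c ltac:(lra) ltac:(apply Rabs_def1; lra)).
  assert (g' c < 0) by nra.
  assert (g (t0 - m) <= g t0) by (apply hmax; apply Rabs_def1; lra).
  nra.
Qed.

Lemma second_derivative_comparison (f1 f2 q q' : R -> R) (s t0 r : R) :
  0 < r ->
  (forall t, Rabs (t - t0) < r -> ex_derive f1 t /\ ex_derive f2 t) ->
  ex_derive (Derive f1) t0 -> ex_derive (Derive f2) t0 ->
  (forall t, is_derive q t (q' t)) -> is_derive q' t0 s ->
  (forall t, Rabs (t - t0) < r -> f2 t - f1 t - q t <= f2 t0 - f1 t0 - q t0) ->
  Derive (Derive f2) t0 - Derive (Derive f1) t0 <= s.
Proof.
intros hr hd hd1 hd2 hq hq' hmax.
cut (Derive (Derive f2) t0 - Derive (Derive f1) t0 - s <= 0); [lra|].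
apply (second_derivative_at_local_max (fun t => f2 t - f1 t - q t)
         (fun t => Derive f2 t - Derive f1 t - q' t) t0 r); auto.
- intros t ht; destruct (hd t ht) as [e1 e2].
  apply is_derive_Reals, (derivable_pt_lim_minus (fun t => f2 t - f1 t) q).
  + apply derivable_pt_lim_minus; apply is_derive_Reals, Derive_correct; assumption.
  + apply is_derive_Reals, hq.
- apply is_derive_Reals, (derivable_pt_lim_minus (fun t => Derive f2 t - Derive f1 t) q').
  + apply derivable_pt_lim_minus; apply is_derive_Reals, Derive_correct; assumption.
  + apply is_derive_Reals, hq'.
Qed.

Definition line (i : nat) (c : pt) (t : R) : pt :=
  match i with
  | O => (t, snd (fst c), snd c)
  | S O => (fst (fst c), t, snd c)
  | _ => (fst (fst c), snd (fst c), t)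
  end.

Definition coord (i : nat) (c : pt) : R :=
  match i with
  | O => fst (fst c)
  | S O => snd (fst c)
  | _ => snd c
  end.

Definition slice (i : nat) (f : pt -> R) (c : pt) (t : R) : R := f (line i c t).

Lemma slice_at_coord (i : nat) (f : pt -> R) (c : pt) : slice i f c (coord i c) = f c.
Proof. destruct c as [[x1 x2] y]; destruct i as [|[|i]]; reflexivity. Qed.

Lemma line_in_cube (i : nat) (c : pt) (r t : R) :
  0 < r -> Rabs (t - coord i c) < r -> in_cube c r (line i c t).
Proof.
intros hr ht; destruct c as [[x1 x2] y].
assert (h0 : Rabs 0 < r) by (rewrite Rabs_R0; exact hr).
unfold in_cube; destruct i as [|[|i]]; simpl in *;
  rewrite ?Rminus_diag; repeat split; assumption.
Qed.

Lemma second_partial_as_slice (i : nat) (f : pt -> R) (c : pt) :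
  partial i (partial i f) c = Derive (Derive (slice i f c)) (coord i c).
Proof. destruct c as [[x1 x2] y]; destruct i as [|[|i]]; reflexivity. Qed.

Lemma smooth_continuous (f : pt -> R) (p : pt) :
  smooth_on_X f -> inX p -> continuous f p.
Proof. intros hf hp; exact (proj1 (hf nil p hp)). Qed.

Lemma smooth_slice_derivable (f : pt -> R) (i : nat) (c : pt) (t : R) :
  smooth_on_X f -> (i <= 2)%nat -> inX (line i c t) -> ex_derive (slice i f c) t.
Proof.
intros hf hi ht; generalize (proj2 (hf nil _ ht) i hi).
destruct c as [[x1 x2] y]; destruct i as [|[|i]]; exact (fun h => h).
Qed.

Lemma smooth_slice_twice_derivable (f : pt -> R) (i : nat) (c : pt) :
  smooth_on_X f -> (i <= 2)%nat -> inX c -> ex_derive (Derive (slice i f c)) (coord i c).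
Proof.
intros hf hi hc; generalize (proj2 (hf (i :: nil) _ hc) i hi).
destruct c as [[x1 x2] y]; destruct i as [|[|i]]; exact (fun h => h).
Qed.

Lemma second_partial_difference_at_max (v1 v2 h : pt -> R) (i : nat) (c : pt)
    (r s : R) (h' : R -> R) :
  smooth_on_X v1 -> smooth_on_X v2 -> (i <= 2)%nat -> 0 < r ->
  (forall q, in_cube c r q -> inX q /\ v2 q - v1 q - h q <= v2 c - v1 c - h c) ->
  (forall t, is_derive (slice i h c) t (h' t)) -> is_derive h' (coord i c) s ->
  partial i (partial i v2) c - partial i (partial i v1) c <= s.
Proof.
intros s1 s2 hi hr hmax hh hh'.
assert (hin : forall t, Rabs (t - coord i c) < r -> inX (line i c t) /\
          slice i v2 c t - slice i v1 c t - slice i h c t <= v2 c - v1 c - h c).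
{ intros t ht; exact (hmax _ (line_in_cube i c r t hr ht)). }
assert (hc : inX c).
{ rewrite <- (slice_at_coord i v1 c) in hin.
  destruct (hin (coord i c)) as [hc _]; [rewrite Rminus_diag, Rabs_R0; exact hr|].
  destruct c as [[x1 x2] y]; destruct i as [|[|i]]; exact hc. }
rewrite !second_partial_as_slice.
apply (second_derivative_comparison _ _ (slice i h c) h' s (coord i c) r); auto.
- intros t ht; split; apply smooth_slice_derivable; try apply hin; auto.
- apply smooth_slice_twice_derivable; auto.
- apply smooth_slice_twice_derivable; auto.
- intros t ht; rewrite !slice_at_coord; apply hin, ht.
Qed.

Definition barrier (A B D E a b : R) (q : pt) : R :=
  A + B * snd q + D * ((fst (fst q) - a) ^ 2 + (snd (fst q) - b) ^ 2) - E * snd q ^ 2.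

Definition barrier_curvature (D E : R) (i : nat) : R :=
  match i with
  | O | S O => 2 * D
  | _ => - (2 * E)
  end.

Lemma barrier_slice_derivatives (A B D E a b : R) (i : nat) (c : pt) :
  exists h', (forall t, is_derive (slice i (barrier A B D E a b) c) t (h' t)) /\
    is_derive h' (coord i c) (barrier_curvature D E i).
Proof.
destruct c as [[x1 x2] y]; unfold slice, barrier, barrier_curvature.
destruct i as [|[|i]]; simpl.
- exists (fun t => 2 * D * (t - a)); split; [intro t|]; auto_derive; auto; ring.
- exists (fun t => 2 * D * (t - b)); split; [intro t|]; auto_derive; auto; ring.
- exists (fun t => B - 2 * E * t); split; [intro t|]; auto_derive; auto; ring.
Qed.

Lemma laplacian_difference_nonneg (P : list Complex.C) (v1 v2 : pt -> R) (p : pt) :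
  solves_star P v1 -> solves_star P v2 -> inX p -> v1 p <= v2 p ->
  0 <= laplacian v2 p - laplacian v1 p.
Proof.
intros [_ e1] [_ e2] hp hle.
specialize (e1 p hp); specialize (e2 p hp).
set (M := Cmod (peval P (fst (fst p), snd (fst p))) ^ 2) in *.
assert (hM : 0 <= M) by apply pow2_ge_0.
assert (hexp : exp (-2 * v2 p) <= exp (-2 * v1 p)).
{ destruct (Req_dec (v1 p) (v2 p)) as [-> | hne]; [lra|].
  left; apply exp_increasing; lra. }
assert (exp (-2 * v2 p) * M <= exp (-2 * v1 p) * M) by (apply Rmult_le_compat_r; auto).
lra.
Qed.

(* Maximum principle: when E = 3 D > 0 the barrier has Laplacian -2 D < 0, so
   v2 - v1 - barrier has no interior local maximum. *)
Lemma difference_has_no_local_max (P : list Complex.C) (v1 v2 : pt -> R)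
    (A B D E a b : R) (c : pt) (r : R) :
  solves_star P v1 -> solves_star P v2 -> v1 c <= v2 c ->
  0 < D -> E = 3 * D -> 0 < r ->
  (forall q, in_cube c r q -> inX q /\
     v2 q - v1 q - barrier A B D E a b q <= v2 c - v1 c - barrier A B D E a b c) ->
  False.
Proof.
intros s1 s2 hle hD hE hr hmax.
assert (hc : inX c).
{ apply hmax; unfold in_cube; rewrite !Rminus_diag, Rabs_R0; auto. }
assert (hdir : forall i, (i <= 2)%nat ->
  partial i (partial i v2) c - partial i (partial i v1) c <= barrier_curvature D E i).
{ intros i hi.
  destruct (barrier_slice_derivatives A B D E a b i c) as [h' [hh hh']].
  exact (second_partial_difference_at_max _ _ _ i c r _ h'
           (proj1 s1) (proj1 s2) hi hr hmax hh hh'). }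
assert (hlap := laplacian_difference_nonneg P v1 v2 c s1 s2 hc hle).
assert (h0 := hdir 0%nat ltac:(lia)); assert (h1 := hdir 1%nat ltac:(lia));
  assert (h2 := hdir 2%nat ltac:(lia)).
unfold laplacian, barrier_curvature in *; lra.
Qed.

Lemma continuous_Rplus (f g : pt -> R) (p : pt) :
  continuous f p -> continuous g p -> continuous (fun q => f q + g q) p.
Proof. exact (continuous_plus f g p). Qed.

Lemma continuous_Rminus (f g : pt -> R) (p : pt) :
  continuous f p -> continuous g p -> continuous (fun q => f q - g q) p.
Proof. exact (continuous_minus f g p). Qed.

Lemma continuous_Rmult (f g : pt -> R) (p : pt) :
  continuous f p -> continuous g p -> continuous (fun q => f q * g q) p.
Proof. exact (continuous_mult f g p). Qed.

Lemma continuous_Rsquare (f : pt -> R) (p : pt) :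
  continuous f p -> continuous (fun q => f q ^ 2) p.
Proof.
intro hf.
exact (continuous_Rmult _ _ _ hf (continuous_Rmult _ _ _ hf (continuous_const 1 p))).
Qed.

Lemma continuous_coord (i : nat) (p : pt) : continuous (coord i) p.
Proof.
destruct p as [[x1 x2] y]; destruct i as [|[|i]].
- apply (continuous_comp fst fst); apply continuous_fst.
- apply (continuous_comp fst snd); [apply continuous_fst|apply continuous_snd].
- apply continuous_snd.
Qed.

Lemma continuous_barrier (A B D E a b : R) (p : pt) :
  continuous (barrier A B D E a b) p.
Proof.
assert (hc : forall c : R, continuous (fun _ : pt => c) p) by (intro; apply continuous_const).
assert (h0 := continuous_coord 0 p); assert (h1 := continuous_coord 1 p);
  assert (h2 := continuous_coord 2 p); simpl in h0, h1, h2.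
unfold barrier.
apply continuous_Rminus; [apply continuous_Rplus; [apply continuous_Rplus|]|];
  try apply continuous_Rmult; try apply continuous_Rplus; try apply continuous_Rsquare;
  try apply continuous_Rminus; auto.
Qed.

Lemma interval_neighbourhood (lo hi x : R) :
  lo < x < hi -> exists r, 0 < r /\ forall t, Rabs (t - x) < r -> lo < t < hi.
Proof.
intros hx; exists (Rmin (x - lo) (hi - x)); split.
- apply Rmin_glb_lt; lra.
- intros t ht; apply Rabs_def2 in ht.
  assert (Rmin (x - lo) (hi - x) <= x - lo) by apply Rmin_l.
  assert (Rmin (x - lo) (hi - x) <= hi - x) by apply Rmin_r.
  lra.
Qed.

Lemma cube_inside_open_box (a1 b1 a2 b2 a3 b3 : R) (c : pt) :
  a1 < fst (fst c) < b1 -> a2 < snd (fst c) < b2 -> a3 < snd c < b3 ->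
  exists r, 0 < r /\ forall q, in_cube c r q -> in_box a1 b1 a2 b2 a3 b3 q.
Proof.
intros h1 h2 h3.
destruct (interval_neighbourhood _ _ _ h1) as [r1 [hr1 k1]].
destruct (interval_neighbourhood _ _ _ h2) as [r2 [hr2 k2]].
destruct (interval_neighbourhood _ _ _ h3) as [r3 [hr3 k3]].
exists (Rmin r1 (Rmin r2 r3)); split; [repeat apply Rmin_glb_lt; assumption|].
assert (Rmin r1 (Rmin r2 r3) <= r1) by apply Rmin_l.
assert (Rmin r1 (Rmin r2 r3) <= r2) by (eapply Rle_trans; [apply Rmin_r|apply Rmin_l]).
assert (Rmin r1 (Rmin r2 r3) <= r3) by (eapply Rle_trans; [apply Rmin_r|apply Rmin_r]).
intros q (q1 & q2 & q3); unfold in_box.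
assert (e1 := k1 (fst (fst q)) ltac:(lra)); assert (e2 := k2 (snd (fst q)) ltac:(lra));
  assert (e3 := k3 (snd q) ltac:(lra)); lra.
Qed.

Lemma barrier_ge_on_slab (A B D E a b Y : R) (q : pt) :
  0 <= D -> 0 <= E -> E * Y = B / 2 -> 0 <= snd q <= Y ->
  A + B * snd q / 2 + D * ((fst (fst q) - a) ^ 2 + (snd (fst q) - b) ^ 2)
    <= barrier A B D E a b q.
Proof.
intros hD hE hEY hq; unfold barrier.
assert (E * snd q ^ 2 <= B * snd q / 2).
{ assert (hEy : E * snd q <= B / 2) by (rewrite <- hEY; apply Rmult_le_compat_l; lra).
  assert (h := Rmult_le_compat_r (snd q) _ _ (proj1 hq) hEy).
  replace (E * snd q ^ 2) with (E * snd q * snd q) by ring; lra. }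
assert (0 <= D * ((fst (fst q) - a) ^ 2 + (snd (fst q) - b) ^ 2)) by
  (apply Rmult_le_pos; [|apply Rplus_le_le_0_compat; apply pow2_ge_0]; lra).
lra.
Qed.

Lemma barrier_at_centre (A B D E a b y : R) :
  0 <= E -> barrier A B D E a b (a, b, y) <= A + B * y.
Proof.
intros hE; unfold barrier; simpl; rewrite !Rminus_diag.
assert (0 <= E * y ^ 2) by (apply Rmult_le_pos; [exact hE|apply pow2_ge_0]).
lra.
Qed.

(* Boundary estimate: where w - barrier is positive on the box, the point lies
   strictly inside (the barrier beats the envelope g on every face). *)
Lemma positive_excess_lies_inside (w : pt -> R) (g : R -> R) (A B Y eta a b : R) (q : pt) :
  0 < A -> 0 < B -> 0 < eta <= Y ->
  (forall y y', 0 < y <= y' -> g y <= g y') ->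
  g eta < A -> g Y <= B * Y / 2 ->
  (forall p, inX p -> w p <= g (snd p)) ->
  in_box (a - 3 * Y) (a + 3 * Y) (b - 3 * Y) (b + 3 * Y) eta Y q ->
  0 < w q - barrier A B (B / (6 * Y)) (B / (2 * Y)) a b q ->
  a - 3 * Y < fst (fst q) < a + 3 * Y /\ b - 3 * Y < snd (fst q) < b + 3 * Y
  /\ eta < snd q < Y.
Proof.
intros hA hB heta hmono hgeta hgY hw hq hpos.
destruct q as [[x1 x2] y]; unfold in_box in hq; simpl in *.
assert (hwq : w (x1, x2, y) <= g y) by (apply hw; unfold inX; simpl; lra).
assert (hgy : g y <= g Y) by (apply hmono; lra).
set (D := B / (6 * Y)) in *; set (E := B / (2 * Y)) in *.
assert (hDY : D * Y = B / 6) by (unfold D; field; lra).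
assert (hEY : E * Y = B / 2) by (unfold E; field; lra).
assert (hD : 0 <= D) by (unfold D; apply Rlt_le, Rdiv_lt_0_compat; lra).
assert (hE : 0 <= E) by (unfold E; apply Rlt_le, Rdiv_lt_0_compat; lra).
assert (hlow := barrier_ge_on_slab A B D E a b Y (x1, x2, y) hD hE hEY ltac:(simpl; lra)).
simpl in hlow.
assert (hsq1 := pow2_ge_0 (x1 - a)); assert (hsq2 := pow2_ge_0 (x2 - b)).
assert (hxy : D * ((x1 - a) ^ 2 + (x2 - b) ^ 2) < B * Y / 2) by nra.
assert (hsq : (x1 - a) ^ 2 + (x2 - b) ^ 2 < 3 * Y ^ 2).
{ apply Rnot_le_lt; intro hge.
  assert (D * (3 * Y ^ 2) <= D * ((x1 - a) ^ 2 + (x2 - b) ^ 2)) by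
    (apply Rmult_le_compat_l; lra).
  nra. }
assert (heta' : eta < y).
{ destruct (Req_dec y eta) as [-> | hne]; [exfalso; nra|lra]. }
assert (hY' : y < Y).
{ destruct (Req_dec y Y) as [-> | hne]; [|lra].
  exfalso; unfold barrier in hpos; simpl in hpos; nra. }
repeat split; nra.
Qed.

Lemma Rpower_le_of_le_root (c s y : R) :
  0 < c -> 0 < s -> 0 < y -> y <= Rpower c (/ s) -> Rpower y s <= c.
Proof.
intros hc hs hy hle.
assert (h := Rle_Rpower_l y (Rpower c (/ s)) s ltac:(lra) (conj hy hle)).
rewrite Rpower_mult, Rinv_l, Rpower_1 in h; lra.
Qed.

Lemma Rpower_ge_of_ge_root (c s y : R) :
  0 < c -> 0 < s -> Rpower c (/ s) <= y -> c <= Rpower y s.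
Proof.
intros hc hs hle.
assert (hpos : 0 < Rpower c (/ s)) by apply exp_pos.
assert (h := Rle_Rpower_l (Rpower c (/ s)) y s ltac:(lra) (conj hpos hle)).
rewrite Rpower_mult, Rinv_l, Rpower_1 in h; lra.
Qed.

Definition envelope (K eps y : R) : R := K * (Rpower y eps + Rpower y (1 - eps)).

Lemma envelope_monotone (K eps y y' : R) :
  0 <= K -> 0 < eps < 1 -> 0 < y <= y' -> envelope K eps y <= envelope K eps y'.
Proof.
intros hK heps hy; unfold envelope.
apply Rmult_le_compat_l; [exact hK|].
apply Rplus_le_compat; apply Rle_Rpower_l; lra.
Qed.

Lemma envelope_small_near_zero (K eps : R) :
  0 < K -> 0 < eps < 1 ->
  forall d m, 0 < d -> 0 < m -> exists eta, 0 < eta <= m /\ envelope K eps eta <= d.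
Proof.
intros hK heps d m hd hm.
set (t := d / (2 * K)).
assert (ht : 0 < t) by (unfold t; apply Rdiv_lt_0_compat; lra).
assert (hr1 : 0 < Rpower t (/ eps)) by apply exp_pos.
assert (hr2 : 0 < Rpower t (/ (1 - eps))) by apply exp_pos.
set (eta := Rmin m (Rmin (Rpower t (/ eps)) (Rpower t (/ (1 - eps))))).
assert (heta : 0 < eta) by (unfold eta; repeat apply Rmin_glb_lt; assumption).
exists eta; split; [split; [exact heta|apply Rmin_l]|].
assert (h1 : Rpower eta eps <= t).
{ apply Rpower_le_of_le_root; try lra.
  unfold eta; eapply Rle_trans; [apply Rmin_r|apply Rmin_l]. }
assert (h2 : Rpower eta (1 - eps) <= t).
{ apply Rpower_le_of_le_root; try lra.
  unfold eta; eapply Rle_trans; [apply Rmin_r|apply Rmin_r]. }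
assert (K * t = d / 2) by (unfold t; field; lra).
unfold envelope; nra.
Qed.

Lemma envelope_sublinear (K eps : R) :
  0 < K -> 0 < eps < 1 ->
  forall B m, 0 < B -> 0 < m -> exists Y, m <= Y /\ envelope K eps Y <= B * Y.
Proof.
intros hK heps B m hB hm.
set (c := 2 * K / B).
assert (hc : 0 < c) by (unfold c; apply Rdiv_lt_0_compat; lra).
assert (hK' : K = c * B / 2) by (unfold c; field; lra).
clearbody c.
set (Y := Rmax m (Rmax (Rpower c (/ eps)) (Rpower c (/ (1 - eps))))).
assert (hmY : m <= Y) by apply Rmax_l.
exists Y; split; [exact hmY|].
assert (h1 : c <= Rpower Y eps).
{ apply Rpower_ge_of_ge_root; try lra.
  unfold Y; eapply Rle_trans; [apply Rmax_l|apply Rmax_r]. }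
assert (h2 : c <= Rpower Y (1 - eps)).
{ apply Rpower_ge_of_ge_root; try lra.
  unfold Y; eapply Rle_trans; [apply Rmax_r|apply Rmax_r]. }
assert (hprod : Rpower Y eps * Rpower Y (1 - eps) = Y).
{ rewrite <- Rpower_plus; replace (eps + (1 - eps)) with 1 by ring.
  apply Rpower_1; lra. }
unfold envelope; rewrite hK'.
set (p := Rpower Y eps) in *; set (q := Rpower Y (1 - eps)) in *.
assert (hp : c * p <= q * p) by (apply Rmult_le_compat_r; lra).
assert (hq : c * q <= p * q) by (apply Rmult_le_compat_r; lra).
assert (hsum : c * p + c * q <= 2 * Y) by lra.
replace (c * B / 2 * (p + q)) with (B / 2 * (c * p + c * q)) by field.
apply Rmult_le_compat_l with (r := B / 2) in hsum; lra.
Qed.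

Theorem difference_vanishes_under_sublinear_envelope (P : list Complex.C)
    (v1 v2 : pt -> R) (g : R -> R) :
  solves_star P v1 -> solves_star P v2 ->
  (forall y y', 0 < y <= y' -> g y <= g y') ->
  (forall d m, 0 < d -> 0 < m -> exists eta, 0 < eta <= m /\ g eta <= d) ->
  (forall B m, 0 < B -> 0 < m -> exists Y, m <= Y /\ g Y <= B * Y) ->
  (forall p, inX p -> 0 <= v2 p - v1 p <= g (snd p)) ->
  forall p, inX p -> v2 p - v1 p <= 0.
Proof.
intros s1 s2 hmono hsmall hlarge hw [[a b] y0] hy0; unfold inX in hy0; simpl in hy0.
apply Rnot_lt_le; intro hdel.
set (del := v2 (a, b, y0) - v1 (a, b, y0)) in hdel.
set (A := del / 2); set (B := del / (4 * y0)).
assert (hB : 0 < B) by (unfold B; apply Rdiv_lt_0_compat; lra).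
destruct (hlarge (B / 2) y0 ltac:(lra) hy0) as [Y [hY hgY]].
destruct (hsmall (del / 4) y0 ltac:(lra) hy0) as [eta [heta hgeta]].
set (D := B / (6 * Y)); set (E := B / (2 * Y)).
set (F := fun q => v2 q - v1 q - barrier A B D E a b q).
set (box := in_box (a - 3 * Y) (a + 3 * Y) (b - 3 * Y) (b + 3 * Y) eta Y).
assert (hbox_X : forall q, box q -> inX q)
  by (intros q (_ & _ & hq); unfold inX; lra).
destruct (continuous_attains_max_on_box F (a - 3 * Y) (a + 3 * Y) (b - 3 * Y) (b + 3 * Y)
            eta Y ltac:(lra) ltac:(lra) ltac:(lra)) as [c [hc hmax]].
{ intros q hq; apply continuous_Rminus; [apply continuous_Rminus|apply continuous_barrier];
    apply smooth_continuous; [apply s2| |apply s1|]; apply hbox_X, hq. }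
assert (hF0 : 0 < F (a, b, y0)).
{ assert (B * y0 = del / 4) by (unfold B; field; lra).
  assert (hE : 0 <= E) by (unfold E; apply Rlt_le, Rdiv_lt_0_compat; lra).
  assert (h := barrier_at_centre A B D E a b y0 hE).
  unfold F, A in *; fold del; lra. }
assert (hFc : 0 < F c) by (apply (Rlt_le_trans _ _ _ hF0), hmax; unfold box, in_box; simpl; lra).
assert (hw' : forall p, inX p -> v2 p - v1 p <= g (snd p)) by (intros p hp; apply hw, hp).
destruct (positive_excess_lies_inside (fun q => v2 q - v1 q) g A B Y eta a b c
            ltac:(unfold A; lra) hB ltac:(lra) hmono ltac:(unfold A; lra) ltac:(lra)
            hw' hc hFc) as (h1 & h2 & h3).
destruct (cube_inside_open_box _ _ _ _ _ _ c h1 h2 h3) as [r [hr hcube]].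
apply (difference_has_no_local_max P v1 v2 A B D E a b c r s1 s2); auto.
- destruct (hw c (hbox_X c hc)); lra.
- unfold D; apply Rdiv_lt_0_compat; lra.
- unfold D, E; field; lra.
- intros q hq; split; [apply hbox_X|apply hmax]; apply hcube, hq.
Qed.

Theorem mainTheorem7 (P : list Complex.C) (v1 v2 : pt -> R) (K eps : R) :
  nonzero_poly P ->
  solves_star P v1 -> solves_star P v2 ->
  0 < K -> 0 < eps < 1 ->
  (forall p : pt, inX p ->
     0 <= v2 p - v1 p <=
     K * (Rpower (snd p) eps + Rpower (snd p) (1 - eps))) ->
  forall p : pt, inX p -> v1 p = v2 p.
Proof.
intros _ s1 s2 hK heps hw p hp.
assert (hmono : forall y y', 0 < y <= y' -> envelope K eps y <= envelope K eps y')
  by (intros y y'; apply envelope_monotone; lra).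
assert (hle := difference_vanishes_under_sublinear_envelope P v1 v2 (envelope K eps)
  s1 s2 hmono (envelope_small_near_zero K eps hK heps)
  (envelope_sublinear K eps hK heps) hw p hp).
destruct (hw p hp); lra.
Qed.
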